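(* Let $\lambda x.\vec{t}$ be a closed $\lambda$-abstraction. Then $\lambda x.\vec{t}\in[\![\sharp\mathbb{B}\rightarrow\sharp\mathbb{B}]\!]$ if and only if $\lambda x.\vec{t}$ represents a unitary operator $F:\mathbb{C}^2\to\mathbb{C}^2$ (i.e. a linear map with $\langle F(u)|F(v)\rangle=\langle u|v\rangle$ for all $u,v\in\mathbb{C}^2$).
   Context: Calculus. Fix a countably infinite set of variables. Pure values: $v,w::=x\mid\lambda x.\vec{s}\mid *\mid (v_1,v_2)\mid \mathtt{inl}(v)\mid\mathtt{inr}(v)$. Pure terms: $s,t::=v\mid s\,t\mid t;\vec{s}\mid \mathtt{let}\,(x_1,x_2)=t\,\mathtt{in}\,\vec{s}\mid \mathtt{match}\,t\,\{\mathtt{inl}\,x_1\mapsto\vec{s}_1\mid\mathtt{inr}\,x_2\mapsto\vec{s}_2\}$. Term distributions: $\vec{t}::=\vec{0}\mid t\mid \vec{s}+\vec{t}\mid\alpha\cdot\vec{t}$ ($\alpha\in\mathbb{C}$); value distributions are those built only from pure values. Terms are considered up to $\alpha$-conversion. Top-level distributions are considered modulo the congruence $\equiv$ generated by $\vec t+\vec 0\equiv\vec t$, $1\cdot\vec t\equiv\vec t$, $\alpha\cdot(\beta\cdot\vec t)\equiv\alpha\beta\cdot\vec t$, commutativity and associativity of $+$, $(\alpha+\beta)\cdot\vec t\equiv\alpha\cdot\vec t+\beta\cdot\vec t$, $\alpha\cdot(\vec t_1+\vec t_2)\equiv\alpha\cdot\vec t_1+\alpha\cdot\vec t_2$; this congruence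 only goes through $+$ and $\cdot$ and never inside pure terms (bodies of abstractions, sequences, lets, match branches are raw distributions up to $\alpha$-conversion only). In particular $0\cdot t\not\equiv\vec 0$; every distribution has a unique canonical form $\sum_i\alpha_i\cdot t_i$ with pairwise distinct pure terms $t_i$ (coefficients possibly $0$), whose set $\{t_i\}$ is its domain. Constructs are extended by linearity: for $\vec v=\sum_i\alpha_i v_i$, $\vec w=\sum_j\beta_j w_j$, $\vec t=\sum_k\gamma_k t_k$, $\vec s=\sum_l\delta_l s_l$: $(\vec v,\vec w)=\sum_{i,j}\alpha_i\beta_j(v_i,w_j)$, $\mathtt{inl}(\vec v)=\sum_i\alpha_i\mathtt{inl}(v_i)$ (similarly $\mathtt{inr}$), $\vec t\,\vec s=\sum_{k,l}\gamma_k\delta_l\, t_k s_l$, and $\vec t;\vec s$, $\mathtt{let}$, $\mathtt{match}$ are linear in their first argument. $\mathtt{tt}:=\mathtt{inl}( * )$, $\mathtt{ff}:=\mathtt{inr}( * )$. $\vec t[x:=w]$ is substitution of a pure value (linear in $\vec t$); bilinear substitution is $\vec t\langle x:=\vec w\rangle:=\sum_j\beta_j\cdot\vec t[x:=w_j]$ for $\vec w=\sum_j\beta_j w_j$ canonical. Evaluation. Atomic evaluation $t\triangleright\vec t'$: $(\lambda x.\vec t)\,v\triangleright\vec t[x:=v]$; $*;\vec s\triangleright\vec s$; $\mathtt{let}\,(x,y)=(v,w)\,\mathtt{in}\,\vec s\triangleright\vec s[x:=v,y:=w]$; $\mathtt{match}\,\mathtt{inl}(v)\{\ldots\}\triangleright\vec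 s_1[x_1:=v]$; $\mathtt{match}\,\mathtt{inr}(v)\{\ldots\}\triangleright\vec s_2[x_2:=v]$; and if $t\triangleright\vec t'$ then $s\,t\triangleright s\,\vec t'$, $t\,v\triangleright\vec t'\,v$, $t;\vec s\triangleright\vec t';\vec s$, $\mathtt{let}\,(x,y)=t\,\mathtt{in}\,\vec s\triangleright\mathtt{let}\,(x,y)=\vec t'\,\mathtt{in}\,\vec s$, $\mathtt{match}\,t\{\ldots\}\triangleright\mathtt{match}\,\vec t'\{\ldots\}$ (here $v,w$ pure values). One-step evaluation: $\vec t\succ\vec t'$ iff $\vec t\equiv\alpha\cdot s+\vec r$ and $\vec t'\equiv\alpha\cdot\vec s'+\vec r$ with $s\triangleright\vec s'$. Evaluation $\vec t\succ^*\vec t'$ is the reflexive-transitive closure. Semantics. $\vec{\mathcal V}$ is the set of closed value distributions. For $\vec v=\sum_i\alpha_i v_i$, $\vec w=\sum_j\beta_jw_j$ in canonical form, $\langle\vec v|\vec w\rangle=\sum_{i,j}\overline{\alpha_i}\beta_j\delta_{v_i,w_j}$, $\|\vec v\|=\sqrt{\langle\vec v|\vec v\rangle}$, $\mathcal S=\{\vec v:\|\vec v\|=1\}$; $\mathrm{Span}(X)$ is the set of finite linear combinations of elements of $X$. Types include $\mathbb U$, $A+B$, $\sharp A$, $A\rightarrow B$ with $[\![\mathbb U]\!]=\{*\}$, $[\![A+B]\!]=\{\mathtt{inl}(\vec v):\vec v\in[\![A]\!]\}\cup\{\mathtt{inr}(\vec w):\vec w\in[\![B]\!]\}$, $[\![\sharp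 A]\!]=\mathrm{Span}([\![A]\!])\cap\mathcal S$, $[\![A\rightarrow B]\!]=\{\lambda x.\vec t\ \text{closed}:\forall\vec v\in[\![A]\!],\ \vec t\langle x:=\vec v\rangle\Vdash B\}$, where $\vec t\Vdash A$ means $\vec t\succ^*\vec v$ for some $\vec v\in[\![A]\!]$. $\mathbb B:=\mathbb U+\mathbb U$. The Boolean projection $\pi_{\mathbb B}:\mathrm{Span}(\{\mathtt{tt},\mathtt{ff}\})\to\mathbb C^2$ sends $\alpha\cdot\mathtt{tt}\mapsto(\alpha,0)$, $\beta\cdot\mathtt{ff}\mapsto(0,\beta)$, $\alpha\cdot\mathtt{tt}+\beta\cdot\mathtt{ff}\mapsto(\alpha,\beta)$. A closed term distribution $\vec t$ represents $F:\mathbb C^2\to\mathbb C^2$ if for every $\vec v\in\mathrm{Span}(\{\mathtt{tt},\mathtt{ff}\})$ there is $\vec w\in\mathrm{Span}(\{\mathtt{tt},\mathtt{ff}\})$ with $\vec t\,\vec v\succ^*\vec w$ and $\pi_{\mathbb B}(\vec w)=F(\pi_{\mathbb B}(\vec v))$. *)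

From HB Require Import structures.
From mathcomp Require Import all_boot all_algebra.
From mathcomp Require Import complex.
From mathcomp Require Import boolp reals Rstruct.
Set Implicit Arguments. Unset Strict Implicit. Unset Printing Implicit Defensive.
Import GRing.Theory Num.Theory.
Local Open Scope ring_scope.

Definition Cplx := (Rdefinitions.R)[i].

(** Binders: [Lam] binds one variable in its body; [LetP t s] binds two
    variables in [s] (index 1 = x1, index 0 = x2); [Match t s1 s2] binds one
    variable in each branch. *)
Inductive value : Type :=
| Var   : nat -> value
| Lam   : dist -> value
| Star  : value
| Pair  : value -> value -> value
| Inl   : value -> value
| Inr   : value -> value
with term : Type :=
| Val   : value -> term
| App   : term -> term -> term
| Seq   : term -> dist -> term
| LetP  : term -> dist -> term
| Match : term -> dist -> dist -> term
with dist : Type :=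
| DZero  : dist
| DT     : term -> dist
| DAdd   : dist -> dist -> dist
| DScale : Cplx -> dist -> dist.

HB.instance Definition _ := gen_eqMixin term.

Definition tt_v : value := Inl Star.
Definition ff_v : value := Inr Star.

Inductive dequiv : dist -> dist -> Prop :=
| dq_refl d : dequiv d d
| dq_sym d e : dequiv d e -> dequiv e d
| dq_trans d e f : dequiv d e -> dequiv e f -> dequiv d f
| dq_add d1 d1' d2 d2' : dequiv d1 d1' -> dequiv d2 d2' ->
    dequiv (DAdd d1 d2) (DAdd d1' d2')
| dq_scale a d d' : dequiv d d' -> dequiv (DScale a d) (DScale a d')
| dq_add0 d : dequiv (DAdd d DZero) d
| dq_scale1 d : dequiv (DScale 1 d) d
| dq_scaleA a b d : dequiv (DScale a (DScale b d)) (DScale (a * b) d)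
| dq_addC d e : dequiv (DAdd d e) (DAdd e d)
| dq_addA d e f : dequiv (DAdd d (DAdd e f)) (DAdd (DAdd d e) f)
| dq_scaleDl a b d : dequiv (DScale (a + b) d) (DAdd (DScale a d) (DScale b d))
| dq_scaleDr a d e : dequiv (DScale a (DAdd d e)) (DAdd (DScale a d) (DScale a e)).

Fixpoint dbind (f : term -> dist) (d : dist) : dist :=
  match d with
  | DZero => DZero
  | DT t => f t
  | DAdd d1 d2 => DAdd (dbind f d1) (dbind f d2)
  | DScale a d => DScale a (dbind f d)
  end.

Definition dmap (f : term -> term) (d : dist) : dist := dbind (fun t => DT (f t)) d.

Definition dmapv (f : value -> value) (d : dist) : dist :=
  dbind (fun t => match t with Val v => DT (Val (f v)) | _ => DZero end) d.

Definition dapp (d1 d2 : dist) : dist :=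
  dbind (fun t => dmap (App t) d2) d1.

Fixpoint coef (d : dist) (u : term) : Cplx :=
  match d with
  | DZero => 0
  | DT t => if t == u then 1 else 0
  | DAdd d1 d2 => coef d1 u + coef d2 u
  | DScale a d => a * coef d u
  end.

Fixpoint dom_raw (d : dist) : seq term :=
  match d with
  | DZero => [::]
  | DT t => [:: t]
  | DAdd d1 d2 => dom_raw d1 ++ dom_raw d2
  | DScale _ d => dom_raw d
  end.

Definition dom (d : dist) : seq term := undup (dom_raw d).

Fixpoint lift_v (c : nat) (v : value) : value :=
  match v with
  | Var n => Var (if (n < c)%N then n else n.+1)
  | Lam d => Lam (lift_d c.+1 d)
  | Star => Star
  | Pair v1 v2 => Pair (lift_v c v1) (lift_v c v2)
  | Inl v => Inl (lift_v c v)
  | Inr v => Inr (lift_v c v)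
  end
with lift_t (c : nat) (t : term) : term :=
  match t with
  | Val v => Val (lift_v c v)
  | App s t => App (lift_t c s) (lift_t c t)
  | Seq t s => Seq (lift_t c t) (lift_d c s)
  | LetP t s => LetP (lift_t c t) (lift_d c.+2 s)
  | Match t s1 s2 => Match (lift_t c t) (lift_d c.+1 s1) (lift_d c.+1 s2)
  end
with lift_d (c : nat) (d : dist) : dist :=
  match d with
  | DZero => DZero
  | DT t => DT (lift_t c t)
  | DAdd d1 d2 => DAdd (lift_d c d1) (lift_d c d2)
  | DScale a d => DScale a (lift_d c d)
  end.

Fixpoint subst_v (k : nat) (w : value) (v : value) : value :=
  match v with
  | Var n => if n == k then w else if (k < n)%N then Var n.-1 else Var n
  | Lam d => Lam (subst_d k.+1 (lift_v 0 w) d)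
  | Star => Star
  | Pair v1 v2 => Pair (subst_v k w v1) (subst_v k w v2)
  | Inl v => Inl (subst_v k w v)
  | Inr v => Inr (subst_v k w v)
  end
with subst_t (k : nat) (w : value) (t : term) : term :=
  match t with
  | Val v => Val (subst_v k w v)
  | App s t => App (subst_t k w s) (subst_t k w t)
  | Seq t s => Seq (subst_t k w t) (subst_d k w s)
  | LetP t s => LetP (subst_t k w t) (subst_d k.+2 (lift_v 0 (lift_v 0 w)) s)
  | Match t s1 s2 =>
      Match (subst_t k w t) (subst_d k.+1 (lift_v 0 w) s1)
            (subst_d k.+1 (lift_v 0 w) s2)
  end
with subst_d (k : nat) (w : value) (d : dist) : dist :=
  match d with
  | DZero => DZero
  | DT t => DT (subst_t k w t)
  | DAdd d1 d2 => DAdd (subst_d k w d1) (subst_d k w d2)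
  | DScale a d => DScale a (subst_d k w d)
  end.

Definition subst1 (d : dist) (v : value) : dist := subst_d 0 v d.

Definition subst2 (d : dist) (v w : value) : dist :=
  subst_d 0 v (subst_d 0 (lift_v 0 w) d).

Definition bsubst (d : dist) (e : dist) : dist :=
  dbind (fun t => match t with Val w => subst1 d w | _ => DZero end) e.

Fixpoint wf_v (k : nat) (v : value) : Prop :=
  match v with
  | Var n => (n < k)%N
  | Lam d => wf_d k.+1 d
  | Star => True
  | Pair v1 v2 => wf_v k v1 /\ wf_v k v2
  | Inl v => wf_v k v
  | Inr v => wf_v k v
  end
with wf_t (k : nat) (t : term) : Prop :=
  match t with
  | Val v => wf_v k v
  | App s t => wf_t k s /\ wf_t k t
  | Seq t s => wf_t k t /\ wf_d k s
  | LetP t s => wf_t k t /\ wf_d k.+2 s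
  | Match t s1 s2 => [/\ wf_t k t, wf_d k.+1 s1 & wf_d k.+1 s2]
  end
with wf_d (k : nat) (d : dist) : Prop :=
  match d with
  | DZero => True
  | DT t => wf_t k t
  | DAdd d1 d2 => wf_d k d1 /\ wf_d k d2
  | DScale _ d => wf_d k d
  end.

Definition closed_value (v : value) : Prop := wf_v 0 v.
Definition closed_dist (d : dist) : Prop := wf_d 0 d.

Fixpoint is_value_dist (d : dist) : Prop :=
  match d with
  | DZero => True
  | DT (Val _) => True
  | DT _ => False
  | DAdd d1 d2 => is_value_dist d1 /\ is_value_dist d2
  | DScale _ d => is_value_dist d
  end.

Definition closed_value_dist (d : dist) : Prop := is_value_dist d /\ closed_dist d.

Inductive atomic : term -> dist -> Prop :=
| at_beta d v : atomic (App (Val (Lam d)) (Val v)) (subst1 d v)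
| at_seq s : atomic (Seq (Val Star) s) s
| at_let v w s : atomic (LetP (Val (Pair v w)) s) (subst2 s v w)
| at_inl v s1 s2 : atomic (Match (Val (Inl v)) s1 s2) (subst1 s1 v)
| at_inr v s1 s2 : atomic (Match (Val (Inr v)) s1 s2) (subst1 s2 v)
| at_appR s t d : atomic t d -> atomic (App s t) (dmap (App s) d)
| at_appL t v d : atomic t d ->
    atomic (App t (Val v)) (dmap (fun u => App u (Val v)) d)
| at_seqC t s d : atomic t d -> atomic (Seq t s) (dmap (fun u => Seq u s) d)
| at_letC t s d : atomic t d -> atomic (LetP t s) (dmap (fun u => LetP u s) d)
| at_matchC t s1 s2 d : atomic t d ->
    atomic (Match t s1 s2) (dmap (fun u => Match u s1 s2) d).

Definition step (d d' : dist) : Prop :=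
  exists (a : Cplx) (s : term) (s' r : dist),
    [/\ dequiv d (DAdd (DScale a (DT s)) r), atomic s s' &
        dequiv d' (DAdd (DScale a s') r)].

Inductive eval : dist -> dist -> Prop :=
| ev_refl d : eval d d
| ev_step d e f : step d e -> eval e f -> eval d f.

Definition inner (v w : dist) : Cplx :=
  \sum_(x <- dom v) \sum_(y <- dom w) ((coef v x)^* * coef w y * (x == y)%:R).

Definition norm (v : dist) : Cplx := sqrtC (inner v v).

Fixpoint lincomb (l : seq (Cplx * dist)) : dist :=
  match l with
  | [::] => DZero
  | (a, v) :: l => DAdd (DScale a v) (lincomb l)
  end.

Definition Span (X : dist -> Prop) (d : dist) : Prop :=
  exists l : seq (Cplx * dist), (forall p, List.In p l -> X p.2) /\ dequiv d (lincomb l).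

Inductive ty : Type :=
| TUnit : ty
| TSum : ty -> ty -> ty
| TSharp : ty -> ty
| TArrow : ty -> ty -> ty.

Definition TBool : ty := TSum TUnit TUnit.

Fixpoint interp (A : ty) : dist -> Prop :=
  match A with
  | TUnit => fun d => dequiv d (DT (Val Star))
  | TSum A B => fun d =>
      (exists v, interp A v /\ dequiv d (dmapv Inl v)) \/
      (exists w, interp B w /\ dequiv d (dmapv Inr w))
  | TSharp A => fun d =>
      [/\ Span (interp A) d, closed_value_dist d & norm d = 1]
  | TArrow A B => fun d =>
      exists t : dist, [/\ dequiv d (DT (Val (Lam t))), closed_value (Lam t) &
        forall v, interp A v ->
          exists v', eval (bsubst t v) v' /\ interp B v']
  end.

Definition realizes (d : dist) (A : ty) : Prop :=
  exists v, eval d v /\ interp A v.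

Definition C2 := (Cplx * Cplx)%type.

Definition piB (d : dist) : C2 := (coef d (Val tt_v), coef d (Val ff_v)).

Definition BoolSpan (d : dist) : Prop :=
  Span (fun x => x = DT (Val tt_v) \/ x = DT (Val ff_v)) d.

Definition represents (d : dist) (F : C2 -> C2) : Prop :=
  forall v, BoolSpan v ->
    exists w, [/\ BoolSpan w, eval (dapp d v) w & piB w = F (piB v)].

Definition inner2 (u v : C2) : Cplx := (u.1)^* * v.1 + (u.2)^* * v.2.

Definition linear2 (F : C2 -> C2) : Prop :=
  forall (a : Cplx) (u v : C2),
    F (a * u.1 + v.1, a * u.2 + v.2) = (a * (F u).1 + (F v).1, a * (F u).2 + (F v).2).

Definition unitary2 (F : C2 -> C2) : Prop :=
  linear2 F /\ forall u v : C2, inner2 (F u) (F v) = inner2 u v.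

(* Evaluation may split a term as [a.s + b.s] and reduce one copy only, but up to
   canonical forms it agrees with a deterministic big-step reduction that rewrites
   every leaf of a distribution and is therefore linear: if [t[x:=tt]] and [t[x:=ff]]
   evaluate to [W1] and [W2], then [t<x:=a.tt + b.ff>] evaluates to [a.W1 + b.W2].
   So a realizer of [#B -> #B] represents the matrix with columns [pi(W1)], [pi(W2)];
   it maps unit vectors to unit vectors, and testing the unit vectors (3/5, 4/5) and
   (3/5, 4i/5) shows that its columns are orthonormal, i.e. it is unitary.
   Conversely, a represented unitary map sends each unit Boolean vector to a unit
   Boolean vector, which is exactly what membership in [#B -> #B] asks for. *)

From mathcomp Require Import all_boot all_algebra.
From mathcomp Require Import complex boolp reals Rstruct ring.
Set Implicit Arguments. Unset Strict Implicit. Unset Printing Implicit Defensive.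
Import GRing.Theory Num.Theory.
Local Open Scope ring_scope.

Local Notation TT := (Val tt_v).
Local Notation FF := (Val ff_v).
Local Notation SB := (TSharp TBool).

Lemma big_delta_seq (T : eqType) (R : pzSemiRingType) (r : seq T) (x : T)
    (F : T -> R) :
  uniq r -> \sum_(y <- r) (x == y)%:R * F y = (x \in r)%:R * F x.
Proof.
elim: r => [|y r IHr] /=; first by rewrite big_nil mul0r.
case/andP=> yNr r_uniq; rewrite big_cons IHr // in_cons.
have [->|_] := eqVneq x y; last by rewrite mul0r add0r.
by rewrite (negPf yNr) !mul0r addr0 mul1r.
Qed.

Lemma big_uniq_sub (T : eqType) (R : nmodType) (s r : seq T) (F : T -> R) :
  uniq s -> uniq r -> {subset s <= r} -> {in r, forall x, x \notin s -> F x = 0} ->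
  \sum_(x <- s) F x = \sum_(x <- r) F x.
Proof.
move=> s_uniq r_uniq sr F0.
rewrite [RHS](bigID (mem s)) /= [X in _ + X]big1_seq ?addr0; last first.
  by move=> x /andP[xNs xr]; apply: F0.
rewrite -[RHS]big_filter; apply: perm_big; apply: uniq_perm => //.
  exact: filter_uniq.
by move=> x; rewrite mem_filter andb_idr //; apply: sr.
Qed.

Definition canon_eq (d e : dist) : Prop := coef d =1 coef e /\ dom_raw d =i dom_raw e.

Lemma canon_eq_refl d : canon_eq d d.
Proof. by []. Qed.

Lemma canon_eq_sym d e : canon_eq d e -> canon_eq e d.
Proof. by case=> c m; split=> u; rewrite ?c ?m. Qed.

Lemma canon_eq_trans d e f : canon_eq d e -> canon_eq e f -> canon_eq d f.
Proof. by case=> c1 m1 [c2 m2]; split=> u; rewrite ?c1 ?c2 ?m1 ?m2. Qed.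

Lemma dequiv_canon_eq d e : dequiv d e -> canon_eq d e.
Proof.
elim=> {d e} /=.
- exact: canon_eq_refl.
- by move=> d e _; apply: canon_eq_sym.
- by move=> d e f _ de _; apply: canon_eq_trans.
- by move=> d1 d1' d2 d2' _ [c1 m1] _ [c2 m2]; split=> u /=; rewrite ?mem_cat ?c1 ?c2 ?m1 ?m2.
- by move=> a d d' _ [c m]; split=> u /=; rewrite ?c ?m.
- by move=> d; split=> u /=; rewrite ?addr0 ?cats0.
- by move=> d; split=> u /=; rewrite ?mul1r.
- by move=> a b d; split=> u /=; rewrite ?mulrA.
- by move=> d e; split=> u /=; rewrite ?mem_cat 1?addrC 1?orbC.
- by move=> d e f; split=> u /=; rewrite ?mem_cat ?addrA ?orbA.
- by move=> a b d; split=> u /=; rewrite ?mem_cat ?mulrDl ?orbb.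
- by move=> a d e; split=> u /=; rewrite ?mulrDr.
Qed.

Lemma coef_DT (s u : term) : coef (DT s) u = (s == u)%:R.
Proof. by rewrite /=; case: eqP. Qed.

Lemma coef_notin d u : u \notin dom_raw d -> coef d u = 0.
Proof.
elim: d => //= [s|d1 IH1 d2 IH2|a d IH].
- by rewrite inE eq_sym => /negPf ->.
- by rewrite mem_cat negb_or => /andP[/IH1 -> /IH2 ->]; rewrite addr0.
- by move/IH ->; rewrite mulr0.
Qed.

Lemma coef_dbind (f : term -> dist) d (r : seq term) u :
  uniq r -> {subset dom_raw d <= r} ->
  coef (dbind f d) u = \sum_(x <- r) coef d x * coef (f x) u.
Proof.
move=> r_uniq; elim: d => [|s|d1 IH1 d2 IH2|a d IH] dr.
- by rewrite big1 // => x _; rewrite mul0r.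
- under eq_bigr do rewrite coef_DT.
  by rewrite big_delta_seq // dr ?mem_head // mul1r.
- rewrite /= IH1 => [|x xd]; last by rewrite dr // mem_cat xd.
  rewrite IH2 => [|x xd]; last by rewrite dr // mem_cat xd orbT.
  by rewrite -big_split; apply: eq_bigr => x _; rewrite mulrDl.
- by rewrite /= IH // mulr_sumr; apply: eq_bigr => x _; rewrite mulrA.
Qed.

Lemma mem_dom_dbind (f : term -> dist) d u :
  (u \in dom_raw (dbind f d)) = has (fun x => u \in dom_raw (f x)) (dom_raw d).
Proof.
elim: d => //= [s|d1 IH1 d2 IH2]; first by rewrite orbF.
by rewrite mem_cat has_cat IH1 IH2.
Qed.

Lemma canon_eq_dbind (f : term -> dist) d e :
  canon_eq d e -> canon_eq (dbind f d) (dbind f e).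
Proof.
case=> c m; split=> u; last by rewrite !mem_dom_dbind; apply: eq_has_r.
have r_uniq := undup_uniq (dom_raw d).
have dr x : x \in dom_raw d -> x \in undup (dom_raw d) by rewrite mem_undup.
have er x : x \in dom_raw e -> x \in undup (dom_raw d) by rewrite mem_undup m.
rewrite (coef_dbind _ _ r_uniq dr) (coef_dbind _ _ r_uniq er).
by apply: eq_bigr => x _; rewrite c.
Qed.

Lemma dequiv_DT_inj s s' : dequiv (DT s) (DT s') -> s = s'.
Proof.
by case/dequiv_canon_eq=> _ /(_ s); rewrite /= !inE eqxx => /esym/eqP.
Qed.

Lemma inner_sum d e (r : seq term) :
  uniq r -> {subset dom_raw d <= r} ->
  inner d e = \sum_(x <- r) (coef d x)^* * coef e x.
Proof.
move=> r_uniq dr; rewrite /inner (big_uniq_sub (undup_uniq _) r_uniq); first last.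
- by move=> x _; rewrite mem_undup => /coef_notin ->; rewrite big1 // => y _; rewrite conjC0 !mul0r.
- by move=> x; rewrite mem_undup; apply: dr.
apply: eq_bigr => x _.
under eq_bigr do rewrite mulrAC -mulrA.
rewrite -mulr_sumr big_delta_seq ?undup_uniq // mem_undup.
by have [|/coef_notin ->] := boolP (x \in dom_raw e); rewrite ?mul1r ?mul0r ?mulr0.
Qed.

Lemma eval_trans d e f : eval d e -> eval e f -> eval d f.
Proof. by elim=> // d0 e0 f0 de _ IH /IH; apply: ev_step. Qed.

Lemma step_atomic s d : atomic s d -> step (DT s) d.
Proof.
move=> sd; have E x : dequiv x (DAdd (DScale 1 x) DZero).
  by apply: dq_sym; apply: dq_trans (dq_add0 _) (dq_scale1 _).
by exists 1, s, d, DZero; split; [apply: E | | apply: E].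
Qed.

Lemma step_addr d e r : step d e -> step (DAdd d r) (DAdd e r).
Proof.
case=> a [s [s' [r0 [ds ss' es']]]]; exists a, s, s', (DAdd r0 r); split=> //.
- by apply: dq_trans (dq_add ds (dq_refl r)) _; apply: dq_sym; apply: dq_addA.
- by apply: dq_trans (dq_add es' (dq_refl r)) _; apply: dq_sym; apply: dq_addA.
Qed.

Lemma step_addl d e r : step d e -> step (DAdd r d) (DAdd r e).
Proof.
case/(step_addr r)=> a [s [s' [r0 [ds ss' es']]]]; exists a, s, s', r0.
by split=> //; apply: dq_trans (dq_addC _ _) _.
Qed.

Lemma step_scale b d e : step d e -> step (DScale b d) (DScale b e).
Proof.
case=> a [s [s' [r [ds ss' es']]]]; exists (b * a), s, s', (DScale b r).
have E x : dequiv (DScale b (DAdd (DScale a x) r)) (DAdd (DScale (b * a) x) (DScale b r)).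
  by apply: dq_trans (dq_scaleDr _ _ _) _; apply: dq_add (dq_scaleA _ _ _) (dq_refl _).
by split=> //; apply: dq_trans (E _); apply: dq_scale.
Qed.

Lemma eval_addr d e r : eval d e -> eval (DAdd d r) (DAdd e r).
Proof.
elim=> [d0|d0 e0 f0 de _ IH]; first exact: ev_refl.
exact: ev_step (step_addr r de) IH.
Qed.

Lemma eval_addl d e r : eval d e -> eval (DAdd r d) (DAdd r e).
Proof.
elim=> [d0|d0 e0 f0 de _ IH]; first exact: ev_refl.
exact: ev_step (step_addl r de) IH.
Qed.

Lemma eval_scale a d e : eval d e -> eval (DScale a d) (DScale a e).
Proof.
elim=> [d0|d0 e0 f0 de _ IH]; first exact: ev_refl.
exact: ev_step (step_scale a de) IH.
Qed.

(* Unlike [step], big-step reduction rewrites every leaf, so it is deterministic. *)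
Inductive bigstep : term -> dist -> Prop :=
| bigstep_val v : bigstep (Val v) (DT (Val v))
| bigstep_red s d w : atomic s d -> bigstepd d w -> bigstep s w
with bigstepd : dist -> dist -> Prop :=
| bigstepd0 : bigstepd DZero DZero
| bigstepdT s w : bigstep s w -> bigstepd (DT s) w
| bigstepdD d1 d2 w1 w2 :
    bigstepd d1 w1 -> bigstepd d2 w2 -> bigstepd (DAdd d1 d2) (DAdd w1 w2)
| bigstepdZ a d w : bigstepd d w -> bigstepd (DScale a d) (DScale a w).

Scheme bigstep_mind := Minimality for bigstep Sort Prop
with bigstepd_mind := Minimality for bigstepd Sort Prop.
Combined Scheme bigstep_mutind from bigstep_mind, bigstepd_mind.

Lemma bigstepdT_inv s w : bigstepd (DT s) w -> bigstep s w.
Proof. by move=> H; inversion H. Qed.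

Lemma bigstepdD_inv d1 d2 w : bigstepd (DAdd d1 d2) w ->
  exists w1 w2, [/\ w = DAdd w1 w2, bigstepd d1 w1 & bigstepd d2 w2].
Proof. by move=> H; inversion H; exists w1, w2. Qed.

Lemma bigstepdZ_inv a d w : bigstepd (DScale a d) w ->
  exists2 w', w = DScale a w' & bigstepd d w'.
Proof. by move=> H; inversion H; exists w0. Qed.

Lemma atomic_Val v d : ~ atomic (Val v) d.
Proof. by move=> H; inversion H. Qed.

Lemma atomic_det s d1 d2 : atomic s d1 -> atomic s d2 -> d1 = d2.
Proof.
move=> H; elim: H d2 => {s d1} [d v|s|v w s|v s1 s2|v s1 s2|s t d td IH|t v d td IH
  |t s d td IH|t s d td IH|t s1 s2 d td IH] d2 H; inversion H; subst => //;
  try by match goal with h : atomic (Val _) _ |- _ => case: (atomic_Val h) end.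
all: by f_equal; apply: IH.
Qed.

Lemma bigstep_det :
  (forall s w1, bigstep s w1 -> forall w2, bigstep s w2 -> w1 = w2) /\
  (forall d w1, bigstepd d w1 -> forall w2, bigstepd d w2 -> w1 = w2).
Proof.
apply: bigstep_mutind.
- move=> v w2 H; inversion H => //.
  by case: (atomic_Val H0).
- move=> s d w sd _ IH w2 H; inversion H; subst; first by case: (atomic_Val sd).
  by apply: IH; rewrite (atomic_det sd H0).
- by move=> w2 H; inversion H.
- by move=> s w _ IH w2 /bigstepdT_inv /IH.
- by move=> d1 d2 w1 w2 _ IH1 _ IH2 w /bigstepdD_inv [w1' [w2' [-> /IH1 <- /IH2 <-]]].
- by move=> a d w _ IH w2 /bigstepdZ_inv [w' -> /IH <-].
Qed.

Lemma bigstepd_det d w1 w2 : bigstepd d w1 -> bigstepd d w2 -> w1 = w2.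
Proof. by move=> dw1 /(proj2 bigstep_det _ _ dw1). Qed.

Lemma bigstepd_value d : is_value_dist d -> bigstepd d d.
Proof.
elim: d => [|s|d1 IH1 d2 IH2|a d IH] /=.
- by move=> _; apply: bigstepd0.
- by case: s => // v _; apply/bigstepdT/bigstep_val.
- by case=> /IH1 ? /IH2 ?; apply: bigstepdD.
- by move/IH; apply: bigstepdZ.
Qed.

Lemma bigstepd_eval d w : bigstepd d w -> eval d w.
Proof.
move: d w; suff : (forall s w, bigstep s w -> eval (DT s) w) /\
       (forall d w, bigstepd d w -> eval d w) by case.
apply: bigstep_mutind.
- by move=> v; apply: ev_refl.
- by move=> s d w sd _ dw; apply: ev_step (step_atomic sd) dw.
- exact: ev_refl.
- by [].
- by move=> d1 d2 w1 w2 _ dw1 _ dw2; apply: eval_trans (eval_addr _ dw1) (eval_addl _ dw2).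
- by move=> a d w _; apply: eval_scale.
Qed.

Lemma dbind_DT d : dbind DT d = d.
Proof. by elim: d => //= [d1 -> d2 ->|a d ->]. Qed.

Lemma bigstepd_dbind (f g : term -> dist) d :
  (forall x, x \in dom_raw d -> bigstepd (f x) (g x)) ->
  bigstepd (dbind f d) (dbind g d).
Proof.
elim: d => /= [|s|d1 IH1 d2 IH2|a d IH] fg.
- exact: bigstepd0.
- by apply: fg; rewrite mem_head.
- by apply: bigstepdD; [apply: IH1 | apply: IH2] => x xd; apply: fg; rewrite mem_cat xd ?orbT.
- exact/bigstepdZ/IH.
Qed.

Lemma bigstepd_leaf d w s : bigstepd d w -> s \in dom_raw d -> exists w', bigstep s w'.
Proof.
elim: d w => //= [s' w /bigstepdT_inv s'w|d1 IH1 d2 IH2 w|a d IH w].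
- by rewrite inE => /eqP ->; exists w.
- by case/bigstepdD_inv=> w1 [w2 [_ /IH1 ? /IH2 ?]]; rewrite mem_cat => /orP[].
- by case/bigstepdZ_inv=> w' _ /IH.
Qed.

Lemma bigstepd_leaves d w : bigstepd d w ->
  exists g : term -> dist, forall s, s \in dom_raw d -> bigstep s (g s).
Proof.
move=> dw; have [|g gP] := @choice _ _ (fun s w' => s \in dom_raw d -> bigstep s w').
  move=> s; have [/(bigstepd_leaf dw)[w' sw']|_] := boolP (s \in dom_raw d).
    by exists w'.
  by exists DZero.
by exists g.
Qed.

Lemma bigstepd_canon_eq d e w : canon_eq d e -> bigstepd d w ->
  exists2 w', bigstepd e w' & canon_eq w w'.
Proof.
move=> de dw; have [g gP] := bigstepd_leaves dw.
have leaves x : canon_eq x d -> bigstepd x (dbind g x).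
  case=> _ xd; rewrite -{1}[x]dbind_DT; apply: bigstepd_dbind => s.
  by rewrite xd => /gP /bigstepdT.
exists (dbind g e); first by apply: leaves; apply: canon_eq_sym.
by rewrite (bigstepd_det dw (leaves d (canon_eq_refl d))); apply: canon_eq_dbind.
Qed.

Lemma bigstepd_step d e w : step d e -> bigstepd e w ->
  exists2 w', bigstepd d w' & canon_eq w w'.
Proof.
case=> a [s [s' [r [ds ss' es']]]] ew.
have [_ /bigstepdD_inv[_ [y [-> /bigstepdZ_inv[x -> s'x] ry]]] ww1] :=
  bigstepd_canon_eq (dequiv_canon_eq es') ew.
have sx : bigstepd (DAdd (DScale a (DT s)) r) (DAdd (DScale a x) y).
  exact/bigstepdD/ry/bigstepdZ/bigstepdT/(bigstep_red ss' s'x).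
have [w2 dw2 w1w2] := bigstepd_canon_eq (canon_eq_sym (dequiv_canon_eq ds)) sx.
by exists w2 => //; apply: canon_eq_trans ww1 w1w2.
Qed.

Lemma eval_bigstepd d e : eval d e -> is_value_dist e ->
  exists2 w, bigstepd d w & canon_eq w e.
Proof.
elim=> {d e} [d /bigstepd_value dd|d e f de _ IH /IH [w ew wf]].
  by exists d => //; apply: canon_eq_refl.
have [w' dw' ww'] := bigstepd_step de ew.
by exists w' => //; apply: canon_eq_trans (canon_eq_sym ww') wf.
Qed.

Lemma bigstepd_dbind_mono (f g : term -> dist) d w :
  (forall x, x \in dom_raw d -> forall w, bigstepd (f x) w -> bigstepd (g x) w) ->
  bigstepd (dbind f d) w -> bigstepd (dbind g d) w.
Proof.
elim: d w => /= [|s|d1 IH1 d2 IH2|a d IH] w fg.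
- by [].
- by apply: fg; rewrite mem_head.
- case/bigstepdD_inv=> w1 [w2 [-> /IH1 dw1 /IH2 dw2]].
  by apply: bigstepdD; [apply: dw1 | apply: dw2] => x xd; apply: fg; rewrite mem_cat xd ?orbT.
- by case/bigstepdZ_inv=> w' -> /IH dw'; apply/bigstepdZ/dw'.
Qed.

Lemma bigstepd_beta t v w :
  bigstepd (DT (App (Val (Lam t)) (Val v))) w <-> bigstepd (subst1 t v) w.
Proof.
split=> [/bigstepdT_inv H|tw]; last exact/bigstepdT/(bigstep_red (at_beta t v) tw).
by inversion H; rewrite (atomic_det (at_beta t v) H0).
Qed.

Lemma is_value_dist_dom d x : is_value_dist d -> x \in dom_raw d -> exists v, x = Val v.
Proof.
elim: d => [|[v| | | | ]|d1 IH1 d2 IH2|a d IH] //=.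
- by move=> _; rewrite inE => /eqP ->; exists v.
- by case=> /IH1 ? /IH2 ?; rewrite mem_cat => /orP[].
Qed.

Lemma bigstepd_dapp_bsubst t v w : is_value_dist v ->
  bigstepd (dapp (DT (Val (Lam t))) v) w <-> bigstepd (bsubst t v) w.
Proof.
move=> v_val; rewrite /dapp /= /dmap /bsubst.
split; apply: bigstepd_dbind_mono => x /(is_value_dist_dom v_val)[u ->] w';
  by rewrite bigstepd_beta.
Qed.

Lemma TT_FF : (TT == FF) = false.
Proof. by apply/eqP. Qed.

Lemma FF_TT : (FF == TT) = false.
Proof. by apply/eqP. Qed.

Lemma uniq_TTFF : uniq [:: TT; FF].
Proof. by rewrite /= inE TT_FF. Qed.

Definition bool_supported (d : dist) : Prop := {subset dom_raw d <= [:: TT; FF]}.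

Lemma bool_supported_value d : bool_supported d -> closed_value_dist d.
Proof.
rewrite /closed_value_dist /closed_dist.
elim: d => [|s|d1 IH1 d2 IH2|a d IH] //= db.
- by have /predU1P[->|/predU1P[->|//]] := db s (mem_head _ _).
- have [|? ?] := IH1; first by move=> x xd; apply: db; rewrite mem_cat xd.
  by have [|? ?] := IH2; first by move=> x xd; apply: db; rewrite mem_cat xd orbT.
Qed.

Lemma dequiv_scale0 a : dequiv (DScale a DZero) DZero.
Proof.
(* [a.0] is idempotent for [+], and [0 = a.0 + (1 - a).0]. *)
set z := DScale a DZero; set y := DScale (1 - a) DZero.
have zy : dequiv DZero (DAdd z y).
  apply: dq_trans (dq_sym (dq_scale1 _)) _.
  by rewrite -{1}(subrKC a 1); apply: dq_scaleDl.
have zz : dequiv z (DAdd z z).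
  by apply: dq_trans (dq_scale a (dq_sym (dq_add0 DZero))) _; apply: dq_scaleDr.
apply: dq_trans (dq_sym (dq_add0 z)) _; apply: dq_trans (dq_add (dq_refl z) zy) _.
apply: dq_trans (dq_addA _ _ _) _; apply: dq_trans (dq_add (dq_sym zz) (dq_refl y)) _.
exact: dq_sym zy.
Qed.

Lemma dequiv_lincomb_cat l1 l2 :
  dequiv (DAdd (lincomb l1) (lincomb l2)) (lincomb (l1 ++ l2)).
Proof.
elim: l1 => [|[a v] l1 IH] /=; first exact: dq_trans (dq_addC _ _) (dq_add0 _).
exact: dq_trans (dq_sym (dq_addA _ _ _)) (dq_add (dq_refl _) IH).
Qed.

Lemma dequiv_lincomb_scale a l :
  dequiv (DScale a (lincomb l)) (lincomb [seq (a * p.1, p.2) | p <- l]).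
Proof.
elim: l => [|[b v] l IH] /=; first exact: dequiv_scale0.
exact: dq_trans (dq_scaleDr _ _ _) (dq_add (dq_scaleA _ _ _) IH).
Qed.

Lemma supported_Span (X : dist -> Prop) (S : seq term) d :
  (forall s, s \in S -> X (DT s)) -> {subset dom_raw d <= S} -> Span X d.
Proof.
move=> XS; elim: d => [|s|d1 IH1 d2 IH2|a d IH] /= dS.
- by exists [::]; split=> //; apply: dq_refl.
- exists [:: (1, DT s)]; split=> [p [<-|[]]|]; first by apply: XS; apply: dS; rewrite mem_head.
  by apply: dq_sym; apply: dq_trans (dq_add0 _) (dq_scale1 _).
- have [|l1 [l1X d1l1]] := IH1; first by move=> x xd; apply: dS; rewrite mem_cat xd.
  have [|l2 [l2X d2l2]] := IH2; first by move=> x xd; apply: dS; rewrite mem_cat xd orbT.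
  exists (l1 ++ l2); split; last exact: dq_trans (dq_add d1l1 d2l2) (dequiv_lincomb_cat _ _).
  by move=> p /List.in_app_iff[/l1X|/l2X].
- have [l [lX dl]] := IH dS.
  exists [seq (a * p.1, p.2) | p <- l]; split; last exact: dq_trans (dq_scale a dl) (dequiv_lincomb_scale _ _).
  by move=> p /List.in_map_iff[q [<- /lX]].
Qed.

Lemma Span_supported (X : dist -> Prop) (S : seq term) d :
  (forall x, X x -> {subset dom_raw x <= S}) -> Span X d -> {subset dom_raw d <= S}.
Proof.
move=> XS [l [lX /dequiv_canon_eq[_ dl]]] u; rewrite dl {d dl}.
elim: l lX => [|[a x] l IH] //= lX; rewrite mem_cat => /orP[].
- by apply: (XS x); apply: (lX (a, x)); left.
- by apply: IH => p lp; apply: lX; right.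
Qed.

Lemma BoolSpanE d : BoolSpan d <-> bool_supported d.
Proof.
split; first by apply: Span_supported => _ [->|->] u; rewrite inE => /eqP ->; rewrite !inE eqxx ?orbT.
by apply: supported_Span => s /predU1P[->|/predU1P[->|//]]; [left|right].
Qed.

Lemma interp_TBool_supported x : interp TBool x -> bool_supported x.
Proof.
case=> -[v [/dequiv_canon_eq[_ vU] /dequiv_canon_eq[_ xv]]] u;
  by rewrite xv mem_dom_dbind (eq_has_r vU) /= orbF inE => /eqP ->; rewrite !inE eqxx ?orbT.
Qed.

Lemma Span_TBoolE d : Span (interp TBool) d <-> bool_supported d.
Proof.
split; first by apply: Span_supported => x /interp_TBool_supported.
apply: supported_Span => s /predU1P[->|/predU1P[->|//]].
- by left; exists (DT (Val Star)); split; apply: dq_refl.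
- by right; exists (DT (Val Star)); split; apply: dq_refl.
Qed.

Lemma norm_eq1 d : norm d = 1 <-> inner d d = 1.
Proof.
rewrite /norm; split=> [dn|->]; last exact: sqrtC1.
by rewrite -[inner d d]sqrtCK dn expr1n.
Qed.

Lemma interp_SB d : interp SB d <-> bool_supported d /\ inner d d = 1.
Proof.
split=> [[/Span_TBoolE db _ /norm_eq1]|[db /norm_eq1 dn]] //.
by split=> //; [apply/Span_TBoolE | apply: bool_supported_value].
Qed.

Lemma inner_bool d e : bool_supported d -> inner d e = inner2 (piB d) (piB e).
Proof. by move=> db; rewrite (inner_sum e uniq_TTFF db) big_cons big_seq1. Qed.

Lemma canon_eq_interp_SB w w' : canon_eq w w' -> interp SB w' -> interp SB w.
Proof.
case=> c m /interp_SB[w'b w'n]; have wb : bool_supported w by move=> u; rewrite m; apply: w'b.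
by apply/interp_SB; split; rewrite // inner_bool // /piB !c -inner_bool.
Qed.

Lemma interp_SB_DT s : s \in [:: TT; FF] -> interp SB (DT s).
Proof.
move=> sB; apply/interp_SB; split; first by move=> u; rewrite inE => /eqP ->.
by rewrite (inner_sum _ (isT : uniq [:: s])) ?big_seq1 /= ?eqxx ?conjC1 ?mulr1.
Qed.

Definition bool_vec (u : C2) : dist := DAdd (DScale u.1 (DT TT)) (DScale u.2 (DT FF)).

Lemma bool_vec_supported u : bool_supported (bool_vec u).
Proof. by move=> x; rewrite /= !inE. Qed.

Lemma piB_bool_vec u : piB (bool_vec u) = u.
Proof. by case: u => a b; rewrite /piB /= !eqxx TT_FF FF_TT !mulr1 !mulr0 addr0 add0r. Qed.

Lemma interp_SB_bool_vec u : inner2 u u = 1 -> interp SB (bool_vec u).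
Proof.
move=> un; apply/interp_SB; split; first exact: bool_vec_supported.
by rewrite inner_bool ?piB_bool_vec //; apply: bool_vec_supported.
Qed.

Definition mx2 (A B : C2) (u : C2) : C2 :=
  (u.1 * A.1 + u.2 * B.1, u.1 * A.2 + u.2 * B.2).

Lemma linear2_mx2 A B : linear2 (mx2 A B).
Proof. by move=> a u v; rewrite /mx2 /=; congr pair; ring. Qed.

Lemma inner2_mx2 A B u v :
  inner2 (mx2 A B u) (mx2 A B v) =
  u.1^* * v.1 * inner2 A A + u.1^* * v.2 * inner2 A B +
  u.2^* * v.1 * inner2 B A + u.2^* * v.2 * inner2 B B.
Proof. by rewrite /inner2 /= !rmorphD !rmorphM; ring. Qed.

Lemma isometric_mx2_orthonormal A B :
  (forall u, inner2 u u = 1 -> inner2 (mx2 A B u) (mx2 A B u) = 1) ->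
  [/\ inner2 A A = 1, inner2 B B = 1, inner2 A B = 0 & inner2 B A = 0].
Proof.
move=> iso; set P := inner2 A B; set Q := inner2 B A.
have iso2 (a b : Cplx) : a^* * a + b^* * b = 1 ->
    a^* * a * inner2 A A + a^* * b * P + b^* * a * Q + b^* * b * inner2 B B = 1.
  by move=> ab; rewrite -(inner2_mx2 A B (a, b) (a, b)) iso.
have AA : inner2 A A = 1.
  by have := iso2 1 0; rewrite conjC1 conjC0 !mulr0 !mul0r !mul1r !addr0 => /(_ erefl).
have BB : inner2 B B = 1.
  by have := iso2 0 1; rewrite conjC1 conjC0 !mulr0 !mul0r !mul1r !add0r => /(_ erefl).
have cross (a b : Cplx) : a^* * a + b^* * b = 1 -> a^* * b * P + b^* * a * Q = 0.
  move=> ab; have := iso2 a b ab; rewrite AA BB !mulr1 => E.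
  transitivity (a^* * a + a^* * b * P + b^* * a * Q + b^* * b - (a^* * a + b^* * b)).
    by ring.
  by rewrite E ab subrr.
(* The unit vectors (3/5, 4/5) and (3/5, 4i/5) isolate P + Q and P - Q. *)
pose a : Cplx := 3 / 5; pose b : Cplx := 4 / 5.
have a_real : a^* = a by rewrite fmorph_div !rmorph_nat.
have b_real : b^* = b by rewrite fmorph_div !rmorph_nat.
have ab1 : a * a + b * b = 1 by rewrite /a /b; field.
have ab_neq0 : a * b != 0 by rewrite !mulf_neq0 ?invr_eq0 ?pnatr_eq0.
have bi_conj : (b * 'i)^* = - (b * 'i) by rewrite rmorphM /= b_real conjCi mulrN.
have /eqP : a * b * (P + Q) = 0 by rewrite -(cross a b) ?a_real ?b_real //; ring.
rewrite mulf_eq0 (negPf ab_neq0) addr_eq0 => /eqP PNQ.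
have /eqP : a * b * 'i * (P - Q) = 0.
  rewrite -(cross a (b * 'i)) ?a_real ?bi_conj; first by ring.
  rewrite -ab1; transitivity (a * a - b * b * 'i ^+ 2); first by ring.
  by rewrite sqrCi mulrN1 opprK.
rewrite 2!mulf_eq0 (negPf ab_neq0) (negPf (neq0Ci _)) subr_eq0 => /eqP PQ.
have Q0 : Q = 0 by apply/eqP; rewrite -eqNr -PNQ PQ.
by split=> //; rewrite PQ.
Qed.

Lemma unitary2_mx2 A B :
  (forall u, inner2 u u = 1 -> inner2 (mx2 A B u) (mx2 A B u) = 1) -> unitary2 (mx2 A B).
Proof.
move=> /isometric_mx2_orthonormal[AA BB AB BA]; split; first exact: linear2_mx2.
by move=> u v; rewrite inner2_mx2 AA BB AB BA /inner2; ring.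
Qed.

Section BoolExtension.

Variables W1 W2 : dist.

Definition bool_ext (v : dist) : dist := dbind (fun x => if x == TT then W1 else W2) v.

Lemma bigstepd_bool_ext t v :
  bigstepd (subst1 t tt_v) W1 -> bigstepd (subst1 t ff_v) W2 ->
  bool_supported v -> bigstepd (bsubst t v) (bool_ext v).
Proof.
move=> tW1 tW2 vb; apply: bigstepd_dbind => x /vb /predU1P[->|/predU1P[->|//]].
  by rewrite eqxx.
by rewrite FF_TT.
Qed.

Lemma bool_ext_supported v :
  bool_supported W1 -> bool_supported W2 -> bool_supported (bool_ext v).
Proof.
move=> W1b W2b u; rewrite mem_dom_dbind => /hasP[x _].
by case: (x == TT); [apply: W1b | apply: W2b].
Qed.

Lemma piB_bool_ext v : bool_supported v -> piB (bool_ext v) = mx2 (piB W1) (piB W2) (piB v).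
Proof.
move=> vb; rewrite /piB /mx2 /bool_ext.
by rewrite !(coef_dbind _ _ uniq_TTFF vb) !big_cons !big_nil !addr0 eqxx FF_TT.
Qed.

End BoolExtension.

Lemma realizer_bigstepd t v :
  (forall v, interp SB v -> exists v', eval (bsubst t v) v' /\ interp SB v') ->
  interp SB v -> exists W, bigstepd (bsubst t v) W /\ interp SB W.
Proof.
move=> t_real /t_real[v' [ev' v'SB]].
have /interp_SB[/bool_supported_value[v'_val _] _] := v'SB.
have [W tW Wv'] := eval_bigstepd ev' v'_val.
by exists W; split; last exact: canon_eq_interp_SB Wv' v'SB.
Qed.

Theorem mainTheorem1 (t : dist) :
  closed_value (Lam t) ->
  (interp (TArrow (TSharp TBool) (TSharp TBool)) (DT (Val (Lam t))) <->
   exists F : C2 -> C2, unitary2 F /\ represents (DT (Val (Lam t))) F).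
Proof.
move=> t_cl; split.
- case=> _ [/dequiv_DT_inj[<-] _ t_real].
  have [W1 [tW1 /interp_SB[W1b _]]] := realizer_bigstepd t_real (interp_SB_DT (mem_head _ _)).
  have [W2 [tW2 /interp_SB[W2b _]]] :=
    realizer_bigstepd t_real (@interp_SB_DT FF (mem_last TT [:: FF])).
  exists (mx2 (piB W1) (piB W2)); split.
  + apply: unitary2_mx2 => u /interp_SB_bool_vec/(realizer_bigstepd t_real)[W [tW]].
    have ub : bool_supported (bool_vec u) by apply: bool_vec_supported.
    rewrite (bigstepd_det tW (bigstepd_bool_ext tW1 tW2 ub)) => /interp_SB[_].
    by rewrite inner_bool ?piB_bool_ext ?piB_bool_vec //; apply: bool_ext_supported.
  + move=> v /BoolSpanE vb; exists (bool_ext W1 W2 v); split.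
    * exact/BoolSpanE/bool_ext_supported.
    * apply/bigstepd_eval/bigstepd_dapp_bsubst; last exact: bigstepd_bool_ext.
      exact: proj1 (bool_supported_value vb).
    * exact: piB_bool_ext.
- case=> F [[_ F_iso] F_rep]; exists t.
  split=> [|//|v /interp_SB[vb v_unit]]; first exact: dq_refl.
  have [w [/BoolSpanE wb ev_w piB_w]] := F_rep v (proj2 (BoolSpanE v) vb).
  have [W vW Ww] := eval_bigstepd ev_w (proj1 (bool_supported_value wb)).
  exists W; split.
  + apply/bigstepd_eval/bigstepd_dapp_bsubst => //.
    exact: proj1 (bool_supported_value vb).
  + apply: canon_eq_interp_SB Ww _; apply/interp_SB; split=> //.
    by rewrite inner_bool // piB_w F_iso -inner_bool.
Qed.
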